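(* Let $C>0$, $\epsilon>0$, positive integers $s\le N$ and $K$ be fixed, let $L=\frac{4}{3}s\ln\left(\frac{eN}{s}\right)+\frac{14}{3}s+\frac{4}{3}\ln\frac{2}{\epsilon}$, and define $$\beta_{\mathrm{tree}}(p,q,\delta,K)=\left[\ln\frac{1}{1-q+q\left(1-p+pe^{-C\delta^2}\right)^K}\right]^{-1}L,\quad \beta_{\mathrm{star}}(p,\delta)=\left[\ln\frac{1}{1-p+pe^{-C\delta^2}}\right]^{-1}L,\quad \beta(\delta)=\frac{L}{C\delta^2}.$$ Then (i) for all $p,q\in[0,1]$ and $\delta\in(0,1)$, $\beta_{\mathrm{tree}}(p,q,\delta,K)\ge\beta_{\mathrm{star}}(q,\sqrt{K}\delta)\ge\beta(\sqrt{K}\delta)/q$; (ii) for fixed $\delta\in(0,1)$ and $K$, $\beta_{\mathrm{tree}}(p,q,\delta,K)$ is strictly decreasing in $p\in[0,1]$ for each fixed $q\in(0,1]$, and strictly decreasing in $q\in[0,1]$ for each fixed $p\in(0,1]$.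
   Context: Conventions: $1/0=+\infty$, so these quantities may equal $+\infty$ (e.g. when $p=0$ or $q=0$). *)

From HB Require Import structures.
From mathcomp Require Import all_boot all_order all_algebra.
From mathcomp Require Import all_classical all_reals all_analysis.
Set Implicit Arguments. Unset Strict Implicit. Unset Printing Implicit Defensive.
Import Order.TTheory GRing.Theory Num.Theory.
Local Open Scope ring_scope.

Definition einv (R : realType) (x : R) : \bar R :=
  if x == 0 then +oo%E else (x^-1)%:E.

Definition Lconst (R : realType) (s N : nat) (eps : R) : R :=
  4 / 3 * s%:R * ln (expR 1 * N%:R / s%:R) + 14 / 3 * s%:R
  + 4 / 3 * ln (2 / eps).

Definition beta_tree (R : realType) (C L : R) (p q delta : R) (K : nat) : \bar R :=
  (einv (ln ((1 - q + q * (1 - p + p * expR (- C * delta ^+ 2)) ^+ K)^-1))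
   * L%:E)%E.

Definition beta_star (R : realType) (C L : R) (p delta : R) : \bar R :=
  (einv (ln ((1 - p + p * expR (- C * delta ^+ 2))^-1)) * L%:E)%E.

Definition beta (R : realType) (C L : R) (delta : R) : R :=
  L / (C * delta ^+ 2).

From HB Require Import structures.
From mathcomp Require Import all_boot all_order all_algebra.
From mathcomp Require Import all_classical all_reals all_analysis.
From mathcomp Require Import ring lra.
Import Order.TTheory GRing.Theory Num.Theory.
Local Open Scope ring_scope.

(* With a = exp (- C delta^2) and g_q x = 1 - q + q x (the generating
   function of a Bernoulli(q) variable), all three quantities are L / ln (1/T):
   T = g_q (g_p (a) ^ K) for the tree, T = g_q (a ^ K) for the star, and
   L / ln (1/T) increases with T.  Since a <= g_p a, the star has the smaller T.
   Convexity of exp gives exp (- q y) <= g_q (exp (- y)), i.e.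
   ln (1 / T_star) <= q C K delta^2, hence beta / q <= beta_star.  Part (ii) is
   the strict monotonicity of g_q x in x (for q > 0) and in q (for x < 1). *)

Definition bernoulli_pgf {R : numDomainType} (q x : R) : R := 1 - q + q * x.

Section BernoulliPgf.
Context {R : realFieldType}.
Implicit Types q x y : R.

Lemma bernoulli_pgf_gt0 q x : 0 <= q <= 1 -> 0 < x -> 0 < bernoulli_pgf q x.
Proof. rewrite /bernoulli_pgf => /andP[q0 q1] x0; nra. Qed.

Lemma bernoulli_pgf_le1 q x : 0 <= q -> x <= 1 -> bernoulli_pgf q x <= 1.
Proof. rewrite /bernoulli_pgf => q0 x1; nra. Qed.

Lemma bernoulli_pgf_lt1 q x : 0 < q -> x < 1 -> bernoulli_pgf q x < 1.
Proof. rewrite /bernoulli_pgf => q0 x1; nra. Qed.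

Lemma bernoulli_pgf_ge q x : q <= 1 -> x <= 1 -> x <= bernoulli_pgf q x.
Proof. rewrite /bernoulli_pgf => q1 x1; nra. Qed.

Lemma ler_bernoulli_pgf q x y :
  0 <= q -> x <= y -> bernoulli_pgf q x <= bernoulli_pgf q y.
Proof. rewrite /bernoulli_pgf => q0 xy; nra. Qed.

Lemma ltr_bernoulli_pgf q x y :
  0 < q -> x < y -> bernoulli_pgf q x < bernoulli_pgf q y.
Proof. rewrite /bernoulli_pgf => q0 xy; nra. Qed.

Lemma ltr_bernoulli_pgf_prob x q1 q2 :
  x < 1 -> q1 < q2 -> bernoulli_pgf q2 x < bernoulli_pgf q1 x.
Proof. rewrite /bernoulli_pgf => x1 q12; nra. Qed.

End BernoulliPgf.

Lemma expR_le_bernoulli_pgf (R : realType) (q y : R) : 0 <= q <= 1 ->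
  expR (- (q * y)) <= bernoulli_pgf q (expR (- y)).
Proof.
move=> /andP[q0 q1].
have := @convex_expR R (Itv01 q0 q1) (- y) 0.
by rewrite !convRE /= /unstable.onem expR0 mulr0 addr0 mulr1 mulrN addrC.
Qed.

Lemma lnV_bernoulli_pgf_le (R : realType) (q y : R) : 0 <= q <= 1 ->
  ln (bernoulli_pgf q (expR (- y)))^-1 <= q * y.
Proof.
move=> q01.
have T0 : 0 < bernoulli_pgf q (expR (- y)).
  by apply: bernoulli_pgf_gt0; rewrite ?expR_gt0.
rewrite lnV ?posrE // lerNl -[leLHS]expRK ler_ln ?posrE ?expR_gt0 //.
exact: expR_le_bernoulli_pgf.
Qed.

Lemma lnV_ge0 (R : realType) (T : R) : 0 < T -> T <= 1 -> 0 <= ln T^-1.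
Proof. by move=> T0 T1; rewrite lnV ?posrE // oppr_ge0 ln_le0. Qed.

Section BetaGen.
Context {R : realType}.
Variable L : R.
Hypothesis L_gt0 : 0 < L.

Definition beta_gen (T : R) : \bar R := (einv (ln T^-1) * L%:E)%E.

Lemma lt_einv_mul (u v : R) : 0 <= u -> u < v ->
  (einv v * L%:E < einv u * L%:E)%E.
Proof.
move=> u0 uv; have v0 := le_lt_trans u0 uv.
rewrite /einv (gt_eqF v0); have [_|un] := eqVneq u 0.
  by rewrite gt0_mulye ?lte_fin // -EFinM ltry.
rewrite -!EFinM lte_fin ltr_pM2r // ltf_pV2 ?posrE //.
by rewrite lt_neqAle eq_sym un.
Qed.

Lemma le_einv_mul (u v : R) : 0 <= u -> u <= v ->
  (einv v * L%:E <= einv u * L%:E)%E.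
Proof.
move=> u0; rewrite le_eqVlt => /predU1P[->//|uv].
exact/ltW/lt_einv_mul.
Qed.

Lemma beta_gen_lt (T1 T2 : R) : 0 < T1 -> T1 < T2 -> T2 <= 1 ->
  (beta_gen T1 < beta_gen T2)%E.
Proof.
move=> T10 T12 T21; have T20 := lt_trans T10 T12.
apply: lt_einv_mul; first exact: lnV_ge0.
by rewrite !lnV ?posrE // ltrN2 ltr_ln ?posrE.
Qed.

Lemma beta_gen_le (T1 T2 : R) : 0 < T1 -> T1 <= T2 -> T2 <= 1 ->
  (beta_gen T1 <= beta_gen T2)%E.
Proof.
move=> T10; rewrite le_eqVlt => /predU1P[->//|T12] T21.
exact/ltW/beta_gen_lt.
Qed.

End BetaGen.

Lemma Lconst_gt0 (R : realType) (eps : R) (s N : nat) : 0 < eps -> eps < 1 ->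
  (0 < s)%N -> (s <= N)%N -> 0 < Lconst s N eps.
Proof.
move=> eps0 eps1 s0 sN; rewrite /Lconst.
have s0' : 0 < s%:R :> R by rewrite ltr0n.
have lnN : 0 <= ln (expR 1 * N%:R / s%:R : R).
  apply: ln_ge0; rewrite -mulrA; apply: mulr_ege1.
    by rewrite -expR0 ler_expR.
  by rewrite ler_pdivlMr // mul1r ler_nat.
have lneps : 0 <= ln (2 / eps) by apply: ln_ge0; rewrite ler_pdivlMr //; lra.
have := mulr_ge0 (ltW s0') lnN; nra.
Qed.

Section Beta.
Context {R : realType} {C L : R}.
Hypotheses (C_gt0 : 0 < C) (L_gt0 : 0 < L).

Lemma beta_treeE (p q delta : R) K : beta_tree C L p q delta K =
  beta_gen L (bernoulli_pgf q (bernoulli_pgf p (expR (- C * delta ^+ 2)) ^+ K)).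
Proof. by []. Qed.

Lemma beta_starE (q delta : R) : beta_star C L q delta =
  beta_gen L (bernoulli_pgf q (expR (- C * delta ^+ 2))).
Proof. by []. Qed.

Lemma expR_Nsqr_gt0_lt1 {delta : R} : 0 < delta ->
  0 < expR (- C * delta ^+ 2) < 1.
Proof.
by move=> d0; rewrite expR_gt0 expR_lt1 mulNr oppr_lt0 mulr_gt0 ?exprn_gt0.
Qed.

Lemma expR_Nsqr_sqrt_natr (delta : R) K :
  expR (- C * (Num.sqrt K%:R * delta) ^+ 2) = expR (- C * delta ^+ 2) ^+ K.
Proof. by rewrite -expRM_natr exprMn sqr_sqrtr ?ler0n //; congr expR; ring. Qed.

Lemma beta_star_le_beta_tree (p q delta : R) K :
  0 <= p <= 1 -> 0 <= q <= 1 -> 0 < delta ->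
  (beta_star C L q (Num.sqrt K%:R * delta) <= beta_tree C L p q delta K)%E.
Proof.
move=> /andP[p0 p1] q01 d0; have /andP[q0 q1] := q01.
have /andP[a0 a1] := expR_Nsqr_gt0_lt1 d0.
rewrite beta_starE beta_treeE expR_Nsqr_sqrt_natr.
set a := expR _ in a0 a1 *; set b := bernoulli_pgf p a.
have ab : a <= b by apply: bernoulli_pgf_ge => //; apply: ltW.
have b1 : b <= 1 by apply: bernoulli_pgf_le1 => //; apply: ltW.
apply: beta_gen_le => //.
- exact/bernoulli_pgf_gt0/exprn_gt0.
- by apply/ler_bernoulli_pgf/lerXn2r; rewrite // nnegrE ltW ?(lt_le_trans a0).
- by apply/bernoulli_pgf_le1/exprn_ile1; rewrite // ltW ?(lt_le_trans a0).
Qed.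

Lemma beta_div_le_beta_star (q delta : R) : 0 <= q <= 1 -> 0 < delta ->
  ((beta C L delta)%:E * einv q <= beta_star C L q delta)%E.
Proof.
move=> q01 d0; have /andP[q0 _] := q01.
rewrite beta_starE /beta_gen /beta mulNr.
have y0 : 0 < C * delta ^+ 2 by rewrite mulr_gt0 ?exprn_gt0.
have [->|qn] := eqVneq q 0.
  (* both sides are +oo *)
  rewrite /einv eqxx /bernoulli_pgf mul0r subr0 addr0 invr1 ln1 eqxx.
  by rewrite gt0_muley ?gt0_mulye ?lte_fin ?divr_gt0.
have qy0 : 0 < q * (C * delta ^+ 2) by rewrite mulr_gt0 // lt_neqAle eq_sym qn.
have -> : ((L / (C * delta ^+ 2))%:E * einv q =
            einv (q * (C * delta ^+ 2)) * L%:E)%E.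
  rewrite /einv (negbTE qn) (gt_eqF qy0) -!EFinM.
  by congr EFin; rewrite !invfM; ring.
apply: le_einv_mul => //; last exact: lnV_bernoulli_pgf_le.
apply: lnV_ge0; first by rewrite bernoulli_pgf_gt0 ?expR_gt0.
by rewrite bernoulli_pgf_le1 // expR_le1 oppr_le0 ltW.
Qed.

Lemma beta_tree_decreasing_p (q delta : R) K (p1 p2 : R) :
  (0 < K)%N -> 0 < q <= 1 -> 0 < delta -> 0 <= p1 -> p1 < p2 -> p2 <= 1 ->
  (beta_tree C L p2 q delta K < beta_tree C L p1 q delta K)%E.
Proof.
move=> K0 /andP[q0 q1] d0 p10 p12 p21.
have /andP[a0 a1] := expR_Nsqr_gt0_lt1 d0.
rewrite !beta_treeE; set a := expR _ in a0 a1 *.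
have q01 : 0 <= q <= 1 by rewrite ltW.
have p201 : 0 <= p2 <= 1 by rewrite p21 ltW ?(le_lt_trans p10 p12).
have b20 : 0 < bernoulli_pgf p2 a by exact: bernoulli_pgf_gt0.
have b21 : bernoulli_pgf p2 a < bernoulli_pgf p1 a.
  exact: ltr_bernoulli_pgf_prob.
have b11 : bernoulli_pgf p1 a <= 1 by rewrite bernoulli_pgf_le1 // ltW.
apply: beta_gen_lt => //.
- exact/bernoulli_pgf_gt0/exprn_gt0.
- by apply: ltr_bernoulli_pgf; rewrite // ltrXn2r -?lt0n // ltW.
- apply: bernoulli_pgf_le1; first exact: ltW.
  exact: exprn_ile1 (ltW (lt_trans b20 b21)) b11.
Qed.

Lemma beta_tree_decreasing_q (p delta : R) K (q1 q2 : R) :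
  (0 < K)%N -> 0 < p <= 1 -> 0 < delta -> 0 <= q1 -> q1 < q2 -> q2 <= 1 ->
  (beta_tree C L p q2 delta K < beta_tree C L p q1 delta K)%E.
Proof.
move=> K0 /andP[p0 p1] d0 q10 q12 q21.
have /andP[a0 a1] := expR_Nsqr_gt0_lt1 d0.
rewrite !beta_treeE; set a := expR _ in a0 a1 *.
have b0 : 0 < bernoulli_pgf p a by rewrite bernoulli_pgf_gt0 // ltW.
have b1 : bernoulli_pgf p a < 1 by exact: bernoulli_pgf_lt1.
have bK0 := exprn_gt0 K b0.
have bK1 : bernoulli_pgf p a ^+ K < 1 by rewrite expr_lte1 // ltW.
apply: beta_gen_lt => //.
- by rewrite bernoulli_pgf_gt0 // q21 ltW ?(le_lt_trans q10 q12).
- exact: ltr_bernoulli_pgf_prob.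
- by rewrite bernoulli_pgf_le1 // ltW.
Qed.

End Beta.

Theorem proposition3 (R : realType) (C eps : R) (s N K : nat)
  (hC : 0 < C) (heps0 : 0 < eps) (heps1 : eps < 1)
  (hs : (0 < s)%N) (hsN : (s <= N)%N) (hK : (0 < K)%N) :
  let L := Lconst s N eps in
  (* (i) *)
  (forall p q delta : R, 0 <= p <= 1 -> 0 <= q <= 1 -> 0 < delta < 1 ->
     (beta_star C L q (Num.sqrt K%:R * delta) <= beta_tree C L p q delta K)%E /\
     ((beta C L (Num.sqrt K%:R * delta))%:E * einv q
        <= beta_star C L q (Num.sqrt K%:R * delta))%E) /\
  (* (ii) *)
  (forall delta : R, 0 < delta < 1 ->
     (forall q : R, 0 < q <= 1 -> forall p1 p2 : R,
        0 <= p1 -> p1 < p2 -> p2 <= 1 ->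
        (beta_tree C L p2 q delta K < beta_tree C L p1 q delta K)%E) /\
     (forall p : R, 0 < p <= 1 -> forall q1 q2 : R,
        0 <= q1 -> q1 < q2 -> q2 <= 1 ->
        (beta_tree C L p q2 delta K < beta_tree C L p q1 delta K)%E)).
Proof.
move=> L; have L0 : 0 < L by exact: Lconst_gt0.
split=> [p q delta p01 q01 /andP[d0 _] | delta /andP[d0 _]].
  have sKd0 : 0 < Num.sqrt K%:R * delta by rewrite mulr_gt0 ?sqrtr_gt0 ?ltr0n.
  split; first exact: (beta_star_le_beta_tree hC L0).
  exact: (beta_div_le_beta_star hC L0).
split=> [q q01 p1 p2 | p p01 q1 q2].
  exact: (beta_tree_decreasing_p hC L0).
exact: (beta_tree_decreasing_q hC L0).
Qed.
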